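(* For nonnegative integers $n,m$, \[\sum_{r=0}^n\sum_{s=0}^m\mathcal{K}_{n,m;r,s}(z/q,w/q;q)\,\Phi_{r,s}(u,v;c,d;z,w;q)=\Phi_{n,m}(uz,vw;cz,dw;z,w;q).\]
   Context: For $n\in\mathbb{Z}$, $(a;q)_n=(a;q)_\infty/(aq^n;q)_\infty$ ($1/(q;q)_n=0$ for $n<0$), $(a_1,\dots,a_k;q)_n=\prod_i(a_i;q)_n$. $\mathcal{K}_{n,m;r,s}(z,w;q):=\frac{z^rw^sq^{r^2-rs+s^2}}{(q;q)_{n-r}(q;q)_{m-s}}$. Let $Q=\{y=(y_1,y_2,y_3)\in\mathbb{Z}^3:y_1+y_2+y_3=0\}$ and $y_{ij}:=y_i-y_j$. For integers $n,m$ and $y\in Q$, \[\Phi_{n,m;y}(z,w;q):=\frac{(zwq;q)_{n+m}}{(q;q)_{n-y_1}(zq;q)_{n-y_2}(zwq;q)_{n-y_3}(q;q)_{m+y_3}(wq;q)_{m+y_2}(zwq;q)_{m+y_1}}.\] With $\rho=(1,2,3)$ and permutations $\sigma\in S_3$ written in one-line notation $\sigma=(\sigma_1,\sigma_2,\sigma_3)$ (so $\sigma-\rho\in Q$), define \[\Phi_{n,m}(u,v;c,d;z,w;q):=\sum_{\sigma\in S_3}\operatorname{sgn}(\sigma)(uz)^{\sigma_1-1}\Big(\frac{v}{d}\Big)^{\chi(\sigma_3=1)}\Big(\frac{c}{u}\Big)^{\chi(\sigma_1=3)}(dw)^{3-\sigma_3}\,\Phi_{n,m;\sigma-\rho}(z/q,w/q;q),\]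 where $\chi$ is the indicator function. *)

From mathcomp Require Import all_boot all_order all_algebra all_fingroup.
Set Implicit Arguments. Unset Strict Implicit. Unset Printing Implicit Defensive.
Import Order.TTheory GRing.Theory Num.Theory.
Local Open Scope ring_scope.

Section Defs.
Variable F : fieldType.

(* q-Pochhammer (a;q)_n for n : int, with (a;q)_n = (a;q)_oo/(a q^n;q)_oo,
   i.e. (a;q)_{-N} = 1 / prod_{j=1}^N (1 - a q^{-j}). *)
Definition qpoch (a q : F) (n : int) : F :=
  match n with
  | Posz k => \prod_(j < k) (1 - a * q ^+ j)
  | Negz k => (\prod_(j < k.+1) (1 - a * q ^- j.+1))^-1
  end.

(* 1/(a;q)_n.  For a = q and n < 0 this is automatically 0 (factor 1 - q^0). *)
Definition rqpoch (a q : F) (n : int) : F := (qpoch a q n)^-1.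

Definition Kcal (n m r s : int) (z w q : F) : F :=
  z ^ r * w ^ s * q ^ (r ^+ 2 - r * s + s ^+ 2)
  * rqpoch q q (n - r) * rqpoch q q (m - s).

Definition Phiy (n m y1 y2 y3 : int) (z w q : F) : F :=
  qpoch (z * w * q) q (n + m)
  * rqpoch q q (n - y1) * rqpoch (z * q) q (n - y2)
  * rqpoch (z * w * q) q (n - y3)
  * rqpoch q q (m + y3) * rqpoch (w * q) q (m + y2)
  * rqpoch (z * w * q) q (m + y1).

Definition i0 : 'I_3 := @Ordinal 3 0 isT.
Definition i1 : 'I_3 := @Ordinal 3 1 isT.
Definition i2 : 'I_3 := @Ordinal 3 2 isT.

(* one-line notation: sigma_i = s (i-1) + 1, so sigma - rho has
   components y_i = s(i-1) - (i-1). *)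
Definition Phi (n m : int) (u v c d z w q : F) : F :=
  \sum_(s : 'S_3)
    (-1) ^+ s * (u * z) ^+ (s i0 : nat)
    * (v / d) ^+ (s i2 == i0) * (c / u) ^+ (s i0 == i2)
    * (d * w) ^+ (2 - s i2)%N
    * Phiy n m ((s i0 : nat)%:Z - 0) ((s i1 : nat)%:Z - 1) ((s i2 : nat)%:Z - 2)
           (z / q) (w / q) q.

End Defs.

(* Both sides are sums over sigma in S_3.  With p = sigma_1 - 1, t = 3 - sigma_3
   the weight sigma - rho is y = (p, t - p, -t), and the substitution
   (u,v,c,d) -> (uz,vw,cz,dw) multiplies the sigma-coefficient by z^p w^t.
   Writing a = z/q, b = w/q, the theorem therefore follows summand by summand
   from the kernel identity [kernel_Phiy]
     sum_(r,s) K_(n,m;r,s)(a,b;q) Phi_(r,s;y)(a,b;q) = (aq)^p (bq)^t Phi_(n,m;y)(a,b;q),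
   valid whenever p^2 + t^2 = pt + p + t (true for all six weights of S_3).
   Phi_(r,s;y) vanishes unless r >= p, s >= t; after the shift r = p + R,
   s = t + S and the substitution A = a q^(2p-t), B = b q^(2t-p), both sides
   become expressions in finite q-Pochhammer symbols (x;q)_k, and the kernel
   identity becomes the double-sum identity [double_sum].  That one is proved by
   expanding its coupling factor with a q-Vandermonde summation
   [qvandermonde], which separates the R- and S-sums; these are evaluated by
   [qbinom_sum_upper] (itself reduced to [qbinom_sum_inv]) and the resulting
   single sum by [qbinom_sum_product]. *)

From mathcomp Require Import all_boot all_order all_algebra all_fingroup.
From mathcomp Require Import zify ring.
Import Order.TTheory GRing.Theory Num.Theory.
Local Open Scope ring_scope.

Set Implicit Arguments. Unset Strict Implicit. Unset Printing Implicit Defensive.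

Definition qfac (F : fieldType) (q x : F) (k : nat) : F :=
  \prod_(j < k) (1 - x * q ^+ j).

Section QSeries.
Variable F : fieldType.
Variable q : F.
Hypothesis q_neq0 : q != 0.
(* q is not a root of unity, i.e. every (q;q)_k is invertible. *)
Hypothesis qfacq_neq0 : forall k, qfac q q k != 0.
Local Notation qf := (qfac q).

Lemma qfac0 x : qf x 0 = 1. Proof. by rewrite /qfac big_ord0. Qed.

Lemma qfacS x k : qf x k.+1 = qf x k * (1 - x * q ^+ k).
Proof. by rewrite /qfac big_ord_recr. Qed.

Lemma qfacSl x k : qf x k.+1 = (1 - x) * qf (x * q) k.
Proof.
rewrite /qfac big_ord_recl expr0 mulr1; congr (_ * _).
by apply: eq_bigr => i _; rewrite lift0 exprS mulrA.
Qed.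

Lemma qfacD x a b : qf x (a + b) = qf x a * qf (x * q ^+ a) b.
Proof.
elim: b => [|b IH]; first by rewrite addn0 qfac0 mulr1.
by rewrite addnS !qfacS IH -!mulrA exprD.
Qed.

Lemma qfacD_neq0 x a b : qf x (a + b) != 0 -> qf (x * q ^+ a) b != 0.
Proof. by rewrite qfacD mulf_eq0 negb_or => /andP[]. Qed.

Lemma qfacS_neq0 x k : qf x k.+1 != 0 -> qf x k != 0 /\ 1 - x * q ^+ k != 0.
Proof. by rewrite qfacS mulf_eq0 negb_or => /andP[]. Qed.

Lemma qfacSl_neq0 x k : qf x k.+1 != 0 -> 1 - x != 0 /\ qf (x * q) k != 0.
Proof. by rewrite qfacSl mulf_eq0 negb_or => /andP[]. Qed.

Lemma one_sub_qpow_neq0 k : 1 - q * q ^+ k != 0.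
Proof. exact: (qfacS_neq0 (qfacq_neq0 k.+1)).2. Qed.

Definition qbinom (N k : nat) : F :=
  if (k <= N)%N then qf q N / (qf q k * qf q (N - k)) else 0.

Lemma qbinom_gt N k : (N < k)%N -> qbinom N k = 0.
Proof. by rewrite /qbinom ltnNge => /negbTE ->. Qed.

Lemma qbinom0 N : qbinom N 0 = 1.
Proof. by rewrite /qbinom leq0n subn0 qfac0 mul1r divff. Qed.

Lemma qbinomnn N : qbinom N N = 1.
Proof. by rewrite /qbinom leqnn subnn qfac0 mulr1 divff. Qed.

(* Inside the range 0 <= k < N, [qbinom] unfolds to an explicit quotient of
   products; both q-Pascal rules are then identities of rational functions. *)
Lemma qbinom_inner k d :
  [/\ qbinom (k + d.+1).+1 k.+1 = qf q (k + d.+1).+1 / (qf q k.+1 * qf q d.+1),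
      qbinom (k + d.+1) k.+1 = qf q (k + d.+1) / (qf q k.+1 * qf q d) &
      qbinom (k + d.+1) k = qf q (k + d.+1) / (qf q k * qf q d.+1)].
Proof.
rewrite /qbinom; split.
- by rewrite ifT ?subSS ?addKn //; lia.
- by rewrite ifT; [congr (_ / (_ * qf q _)); lia | lia].
- by rewrite ifT ?addKn //; lia.
Qed.

Lemma qpascal N k : qbinom N.+1 k.+1 = qbinom N k.+1 + q ^+ (N - k) * qbinom N k.
Proof.
case: (ltngtP k N) => Hk.
- have [d ->] : exists d, N = (k + d.+1)%N by exists (N - k.+1)%N; lia.
  have [-> -> ->] := qbinom_inner k d.
  have -> : (k + d.+1 - k = d.+1)%N by lia.
  rewrite !qfacS exprD !exprS.
  have h1 := qfacq_neq0 k; have h2 := qfacq_neq0 d.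
  have h3 := one_sub_qpow_neq0 k; have h4 := one_sub_qpow_neq0 d.
  by field; rewrite h1 h2 h3 h4.
- by rewrite !qbinom_gt // ?mulr0 ?addr0 //; lia.
- by rewrite -Hk !qbinomnn qbinom_gt // subnn expr0 mul1r add0r.
Qed.

Lemma qpascal' N k : qbinom N.+1 k.+1 = qbinom N k + q ^+ k.+1 * qbinom N k.+1.
Proof.
case: (ltngtP k N) => Hk.
- have [d ->] : exists d, N = (k + d.+1)%N by exists (N - k.+1)%N; lia.
  have [-> -> ->] := qbinom_inner k d.
  rewrite !qfacS exprD !exprS.
  have h1 := qfacq_neq0 k; have h2 := qfacq_neq0 d.
  have h3 := one_sub_qpow_neq0 k; have h4 := one_sub_qpow_neq0 d.
  by field; rewrite h1 h2 h3 h4.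
- by rewrite !qbinom_gt // ?mulr0 ?addr0 //; lia.
- by rewrite -Hk !qbinomnn (qbinom_gt (ltnSn k)) mulr0 addr0.
Qed.

Lemma qbinom_qfacS M k :
  qbinom M.+1 k.+1 * qf q k.+1 = (1 - q * q ^+ M) * (qbinom M k * qf q k).
Proof.
rewrite /qbinom ltnS; case: (leqP k M) => Hk; last by rewrite !mul0r mulr0.
rewrite subSS !qfacS.
have h1 := qfacq_neq0 k; have h2 := qfacq_neq0 (M - k); have h3 := one_sub_qpow_neq0 k.
by field; rewrite h1 h2 h3.
Qed.

Lemma sum_nat_shift n (f : nat -> F) : f n.+1 = 0 ->
  f 0%N + \sum_(0 <= k < n.+1) f k.+1 = \sum_(0 <= k < n.+1) f k.
Proof. by move=> H; rewrite -big_nat_recl // big_nat_recr //= H addr0. Qed.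

Lemma sum_nat_widen a b (f : nat -> F) : (a <= b)%N ->
  (forall k, (a < k)%N -> f k = 0) ->
  \sum_(0 <= k < a.+1) f k = \sum_(0 <= k < b.+1) f k.
Proof.
move=> hab H; rewrite [RHS](@big_cat_nat _ _ _ a.+1) //=.
rewrite [X in _ = _ + X]big1_seq ?addr0 // => k /andP[_].
by rewrite mem_index_iota => /andP[h _]; apply: H.
Qed.

Lemma qbinom_sum_inv L c : (forall j, qf (c * q) j != 0) ->
  \sum_(0 <= j < L.+1) qbinom L j * c ^+ j * q ^+ (j * j) / qf (c * q) j
  = (qf (c * q) L)^-1.
Proof.
elim: L c => [|L IH] c hc.
  by rewrite big_nat1 qbinom0 qfac0 muln0 !expr0 invr1 !mulr1.
have [hc1 _] := qfacSl_neq0 (hc 1%N).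
have hcq j : qf (c * q * q) j != 0 by have [] := qfacSl_neq0 (hc j.+1).
rewrite big_nat_recl //.
under eq_big_nat => j _ do rewrite qpascal !mulrDl.
rewrite big_split /= addrA qbinom0 -(qbinom0 L).
rewrite (@sum_nat_shift L (fun j => qbinom L j * c ^+ j * q ^+ (j * j) / qf (c * q) j));
  last first.
  by rewrite qbinom_gt // !mul0r.
rewrite IH // (_ : \sum_(0 <= i < L.+1) _ = c * q ^+ L.+1 / (1 - c * q) *
  \sum_(0 <= i < L.+1) qbinom L i * (c * q) ^+ i * q ^+ (i * i) / qf (c * q * q) i).
  have E : qf (c * q * q) L = qf (c * q) L * (1 - c * q * q ^+ L) / (1 - c * q).
    by rewrite -qfacS qfacSl; field.
  have [hL hv] := qfacS_neq0 (hc L.+1).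
  by rewrite IH // E exprS qfacS; field; rewrite hL hv hc1.
rewrite big_distrr /=; apply: eq_big_nat => i /andP[_ Hi].
rewrite qfacSl (_ : (i.+1 * i.+1 = i * i + i + i + 1)%N); last by lia.
rewrite (_ : L.+1 = (L - i + i + 1)%N); last by lia.
rewrite !exprD !expr1 exprS exprMn.
have hi := hcq i; by field; rewrite hc1 hi.
Qed.

(* The general term of [qbinom_sum_upper], after the shift R = k + j. *)
Lemma qbinom_sum_upper_term N k j A : (k + j <= N)%N ->
  (forall i, qf (A * q) i != 0) ->
  qbinom (j + k) k * A ^+ (j + k) * q ^+ ((j + k) * (j + k)) / q ^+ (k * (j + k))
    / (qf q (N - (j + k)) * qf q (j + k) * qf (A * q) (j + k))
  = A ^+ k / (qf q k * qf (A * q) k * qf q (N - k)) *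
    (qbinom (N - k) j * (A * q ^+ k) ^+ j * q ^+ (j * j) / qf (A * q ^+ k * q) j).
Proof.
move=> HkjN hA.
have hAk i : qf (A * q ^+ k * q) i != 0.
  by have := qfacD_neq0 (hA (k + i)%N); rewrite mulrAC.
rewrite /qbinom ifT; last by lia.
rewrite ifT; last by lia.
rewrite (_ : (j + k - k = j)%N); last by lia.
rewrite (_ : (N - (j + k) = N - k - j)%N); last by lia.
have EA : qf (A * q) (k + j) = qf (A * q) k * qf (A * q ^+ k * q) j.
  by rewrite qfacD mulrAC.
rewrite addnC EA.
rewrite (_ : ((k + j) * (k + j) = k * k + k * j + j * j + k * j)%N); last by lia.
rewrite (_ : (k * (k + j))%N = (k * k + k * j)%N); last by lia.
rewrite !exprD exprMn -exprM.
have h1 := qfacq_neq0 j; have h2 := qfacq_neq0 k; have h3 := qfacq_neq0 (N - k - j).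
have h4 := qfacq_neq0 (N - k); have h5 := hAk j; have h6 := hA k.
have h7 : q ^+ (k * k) != 0 by rewrite expf_neq0.
have h8 : q ^+ (k * j) != 0 by rewrite expf_neq0.
have h9 := qfacq_neq0 (k + j).
by field; rewrite h1 h2 h3 h4 h5 h6 h7 h8 h9.
Qed.

Lemma qbinom_sum_upper N k A : (forall j, qf (A * q) j != 0) ->
  \sum_(0 <= R < N.+1) qbinom R k * A ^+ R * q ^+ (R * R) / q ^+ (k * R)
       / (qf q (N - R) * qf q R * qf (A * q) R)
  = A ^+ k * qbinom N k / (qf q N * qf (A * q) N).
Proof.
move=> hA.
case: (leqP k N) => HkN; last first.
  rewrite qbinom_gt // mulr0 mul0r big1_seq // => R /andP[_].
  by rewrite mem_index_iota => /andP[_ HR]; rewrite qbinom_gt ?mul0r //; lia.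
rewrite (@big_cat_nat _ _ _ k) //=; last by lia.
rewrite big1_seq ?add0r; last first.
  move=> R /andP[_]; rewrite mem_index_iota => /andP[_ HR].
  by rewrite qbinom_gt ?mul0r.
rewrite -{1}(add0n k) big_addn (_ : (N.+1 - k = (N - k).+1)%N); last by lia.
have hAk i : qf (A * q ^+ k * q) i != 0.
  by have := qfacD_neq0 (hA (k + i)%N); rewrite mulrAC.
under eq_big_nat => j /andP[_ Hj].
  rewrite qbinom_sum_upper_term //; last by lia.
  over.
rewrite -big_distrr /= qbinom_sum_inv // /qbinom HkN.
have EN : qf (A * q) N = qf (A * q) k * qf (A * q ^+ k * q) (N - k).
  by rewrite -{1}(subnKC HkN) qfacD mulrAC.
have h1 := hAk (N - k)%N; have h2 := qfacq_neq0 k; have h3 := qfacq_neq0 (N - k)%N.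
have h4 := hA k; have h5 := qfacq_neq0 N.
by rewrite EN; field; rewrite h1 h2 h3 h4 h5.
Qed.

Lemma qbinom_sum_product N M X : (forall j, qf (X * q) j != 0) ->
  \sum_(0 <= k < N.+1)
     qbinom N k * qbinom M k * qf q k * X ^+ k * q ^+ (k * k) / qf (X * q) k
  = qf (X * q) (N + M) / (qf (X * q) N * qf (X * q) M).
Proof.
elim: N M X => [|N IH] M X hX.
  rewrite big_nat1 !qbinom0 qfac0 muln0 !expr0 add0n qfac0 !mulr1 !mul1r invr1.
  by rewrite divff.
have [hX1 _] := qfacSl_neq0 (hX 1%N).
have hXq j : qf (X * q * q) j != 0 by have [] := qfacSl_neq0 (hX j.+1).
have shiftX j : qf (X * q * q) j = qf (X * q) j.+1 / (1 - X * q).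
  by rewrite qfacSl; field.
rewrite big_nat_recl //.
under eq_big_nat => j _ do rewrite qpascal !mulrDl.
rewrite big_split /= addrA qbinom0 -(qbinom0 N).
rewrite (@sum_nat_shift N (fun k => qbinom N k * qbinom M k * qf q k * X ^+ k *
  q ^+ (k * k) / qf (X * q) k)); last by rewrite qbinom_gt // !mul0r.
rewrite IH //; case: M => [|M].
  rewrite big1 ?addr0; last by move=> i _; rewrite (qbinom_gt (ltn0Sn i)) !mulr0 !mul0r.
  by rewrite !addn0 !qfac0 !mulr1 !divff.
rewrite (_ : \sum_(0 <= i < N.+1) _ = (1 - q * q ^+ M) * X * q ^+ N.+1 / (1 - X * q) *
  \sum_(0 <= i < N.+1) qbinom N i * qbinom M i * qf q i * (X * q) ^+ i *
     q ^+ (i * i) / qf (X * q * q) i).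
  have [hN hN1] := qfacS_neq0 (hX N.+1).
  have [hM hM1] := qfacS_neq0 (hX M.+1).
  rewrite IH // !shiftX -addnS !addSn !qfacS !exprS !exprD !exprS.
  by field; rewrite hN hM hM1 hN1 hX1.
rewrite big_distrr /=; apply: eq_big_nat => i /andP[_ Hi].
rewrite -[_ * qbinom M.+1 i.+1 * _]mulrA qbinom_qfacS qfacSl.
rewrite (_ : (i.+1 * i.+1 = i * i + i + i + 1)%N); last by lia.
rewrite (_ : N.+1 = (N - i + i + 1)%N); last by lia.
rewrite !exprD !expr1 exprS exprMn.
have hi := hXq i; by field; rewrite hX1 hi.
Qed.

Lemma qpascal_lower r k :
  qbinom r.+1 k = q ^+ k * qbinom r k + (if k is k'.+1 then qbinom r k' else 0).
Proof.
by case: k => [|k]; rewrite ?qbinom0 ?expr0 ?mulr1 ?addr0 // qpascal' addrC.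
Qed.

(* Raising the first index of the weight q^((r-k)(s-k)) from r to r+1
   contributes q^k * q^(s-k) = q^s to every nonzero term. *)
Lemma qvandermonde_weight r s x :
  \sum_(0 <= i < r.+2)
     q ^+ i * qbinom r i * qbinom s i * qf q i * q ^+ ((r.+1 - i) * (s - i)) / qf x i
  = q ^+ s * \sum_(0 <= k < r.+1)
     qbinom r k * qbinom s k * qf q k * q ^+ ((r - k) * (s - k)) / qf x k.
Proof.
rewrite big_nat_recr //= qbinom_gt // !mulr0 !mul0r addr0 big_distrr /=.
apply: eq_big_nat => k /andP[_ Hk].
case: (leqP k s) => Hks; last by rewrite (qbinom_gt Hks) !(mulr0, mul0r).
have E : q ^+ k * q ^+ ((r.+1 - k) * (s - k)) = q ^+ s * q ^+ ((r - k) * (s - k)).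
  by rewrite -!exprD; congr (_ ^+ _); nia.
transitivity (qbinom r k * qbinom s k * qf q k / qf x k *
  (q ^+ k * q ^+ ((r.+1 - k) * (s - k)))); first by ring.
by rewrite E; ring.
Qed.

Lemma qvandermonde r s x : (forall j, qf x j != 0) ->
  \sum_(0 <= k < r.+1)
     qbinom r k * qbinom s k * qf q k * q ^+ ((r - k) * (s - k)) / qf x k
  = qf x (r + s) / (qf x r * qf x s).
Proof.
elim: r s x => [|r IH] s x hx.
  rewrite big_nat1 !qbinom0 qfac0 sub0n mul0n expr0 add0n qfac0 !mulr1 !mul1r invr1.
  by rewrite divff.
have [hx1 _] := qfacSl_neq0 (hx 1%N).
have hxq j : qf (x * q) j != 0 by have [] := qfacSl_neq0 (hx j.+1).
have shiftx j : qf (x * q) j = qf x j.+1 / (1 - x) by rewrite qfacSl; field.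
under eq_big_nat => k _ do rewrite qpascal_lower !mulrDl.
rewrite big_split /= qvandermonde_weight IH // big_nat_recl //= !mul0r add0r.
case: s => [|s].
  rewrite big1 ?addr0; last by move=> i _; rewrite (qbinom_gt (ltn0Sn i)) !mulr0 !mul0r.
  by rewrite expr0 mul1r !addn0 !qfac0 !mulr1 !divff.
rewrite (_ : \sum_(0 <= i < r.+1) _ = (1 - q * q ^+ s) / (1 - x) *
  \sum_(0 <= i < r.+1) qbinom r i * qbinom s i * qf q i *
    q ^+ ((r - i) * (s - i)) / qf (x * q) i).
  have [hr hr1] := qfacS_neq0 (hx r.+1).
  have [hs hs1] := qfacS_neq0 (hx s.+1).
  rewrite IH // !shiftx -addnS !addSn !qfacS !exprS !exprD !exprS.
  by field; rewrite hr hs hr1 hs1 hx1.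
rewrite big_distrr /=; apply: eq_big_nat => i /andP[_ Hi].
rewrite -[_ * qbinom s.+1 i.+1 * _]mulrA qbinom_qfacS qfacSl !subSS.
have hi := hxq i; by field; rewrite hx1 hi.
Qed.

Section DoubleSum.
Variables (N M : nat) (A B : F).
Hypothesis hA : forall j, qf (A * q) j != 0.
Hypothesis hB : forall j, qf (B * q) j != 0.
Hypothesis hAB : forall j, qf (A * B * q) j != 0.

(* The summand of the double sum [double_sum], and the factors into which
   [qvandermonde] splits its coupling term
   q^(-RS) (ABq;q)_(R+S) / ((ABq;q)_R (ABq;q)_S). *)
Definition dterm (R S : nat) : F :=
  A ^+ R * q ^+ (R * R) / (qf q (N - R) * qf q R * qf (A * q) R) *
  (B ^+ S * q ^+ (S * S) / (qf q (M - S) * qf q S * qf (B * q) S)) / q ^+ (R * S) *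
  (qf (A * B * q) (R + S) / (qf (A * B * q) R * qf (A * B * q) S)).

Definition aterm (R k : nat) : F := qbinom R k * A ^+ R * q ^+ (R * R) / q ^+ (k * R)
  / (qf q (N - R) * qf q R * qf (A * q) R).
Definition bterm (S k : nat) : F := qbinom S k * B ^+ S * q ^+ (S * S) / q ^+ (k * S)
  / (qf q (M - S) * qf q S * qf (B * q) S).
Definition gterm (k : nat) : F := qf q k * q ^+ (k * k) / qf (A * B * q) k.

Lemma dterm_split R S k : (k <= R)%N -> (k <= S)%N ->
  dterm R S / (qf (A * B * q) (R + S) / (qf (A * B * q) R * qf (A * B * q) S)) *
    (qbinom R k * qbinom S k * qf q k * q ^+ ((R - k) * (S - k)) / qf (A * B * q) k)
  = gterm k * (aterm R k * bterm S k).
Proof.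
move=> hkR hkS.
have hq e : q ^+ e != 0 by rewrite expf_neq0.
have Eq : q ^+ ((R - k) * (S - k))
          = q ^+ (k * k) * q ^+ (R * S) / (q ^+ (k * R) * q ^+ (k * S)).
  apply: (@mulIf _ (q ^+ (k * R) * q ^+ (k * S))); first by rewrite mulf_neq0.
  by rewrite divfK ?mulf_neq0 // -!exprD; congr (_ ^+ _); nia.
rewrite /dterm /gterm /aterm /bterm Eq.
have h1 := hAB R; have h2 := hAB S; have h3 := hAB (R + S)%N; have h4 := qfacq_neq0 k.
have h5 := qfacq_neq0 R; have h6 := qfacq_neq0 S; have h7 := hA R; have h8 := hB S.
have h9 := qfacq_neq0 (N - R)%N; have h10 := qfacq_neq0 (M - S)%N; have h11 := hAB k.
have h12 := hq (k * R)%N; have h13 := hq (k * S)%N; have h14 := hq (R * S)%N.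
by field; rewrite ?h1 ?h2 ?h3 ?h4 ?h5 ?h6 ?h7 ?h8 ?h9 ?h10 ?h11 ?h12 ?h13 ?h14.
Qed.

(* Expanding the coupling term by [qvandermonde] separates the variables:
   the double sum becomes sum_k g_k (sum_R a_(R,k)) (sum_S b_(S,k)). *)
Lemma double_sum_decouple :
  \sum_(0 <= R < N.+1) \sum_(0 <= S < M.+1) dterm R S
  = \sum_(0 <= k < N.+1) gterm k *
      ((\sum_(0 <= R < N.+1) aterm R k) * (\sum_(0 <= S < M.+1) bterm S k)).
Proof.
transitivity (\sum_(0 <= R < N.+1) \sum_(0 <= S < M.+1) \sum_(0 <= k < N.+1)
                gterm k * (aterm R k * bterm S k)).
  apply: eq_big_nat => R /andP[_ HR]; apply: eq_big_nat => S _.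
  have hD : qf (A * B * q) (R + S) / (qf (A * B * q) R * qf (A * B * q) S) != 0.
    by rewrite mulf_neq0 ?invr_eq0 ?mulf_neq0 ?hAB.
  rewrite -(divfK hD (dterm R S)) -[X in _ * X](qvandermonde _ _ hAB).
  rewrite (@sum_nat_widen R N) //;
    last by move=> k hk; rewrite (qbinom_gt hk) !(mulr0, mul0r).
  rewrite big_distrr /=; apply: eq_big_nat => k _.
  case: (leqP k R) => hkR; last by rewrite /aterm (qbinom_gt hkR) !(mulr0, mul0r).
  case: (leqP k S) => hkS; last by rewrite /bterm (qbinom_gt hkS) !(mulr0, mul0r).
  exact: dterm_split.
under eq_big_nat => R _ do rewrite exchange_big_nat.
rewrite exchange_big_nat; apply: eq_big_nat => k _.
rewrite [in RHS]big_distrl /= [in RHS]big_distrr /=; apply: eq_big_nat => R _.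
by rewrite big_distrr /= big_distrr.
Qed.

Lemma double_sum :
  \sum_(0 <= R < N.+1) \sum_(0 <= S < M.+1) dterm R S
  = qf (A * B * q) (N + M) / (qf q N * qf (A * q) N * qf (A * B * q) N *
                              qf q M * qf (B * q) M * qf (A * B * q) M).
Proof.
rewrite double_sum_decouple.
under eq_big_nat => k _ do rewrite !qbinom_sum_upper //.
transitivity (\sum_(0 <= k < N.+1)
     qbinom N k * qbinom M k * qf q k * (A * B) ^+ k * q ^+ (k * k) / qf (A * B * q) k
   / (qf q N * qf (A * q) N * qf q M * qf (B * q) M)).
  apply: eq_big_nat => k _; rewrite /gterm exprMn.
  have h1 := qfacq_neq0 N; have h2 := qfacq_neq0 M; have h3 := hA N; have h4 := hB M.
  have h5 := hAB k.
  by field; rewrite h1 h2 h3 h4 h5.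
rewrite -mulr_suml qbinom_sum_product //.
have h1 := qfacq_neq0 N; have h2 := qfacq_neq0 M; have h3 := hA N; have h4 := hB M.
have h5 := hAB N; have h6 := hAB M.
by field; rewrite h1 h2 h3 h4 h5 h6.
Qed.

End DoubleSum.

End QSeries.

Section Translation.
Variable F : fieldType.
Variable q : F.
Hypothesis q_neq0 : q != 0.
Hypothesis qfacq_neq0 : forall k, qfac q q k != 0.
Local Notation qf := (qfac q).

Lemma qpoch_nat x k : qpoch x q (Posz k) = qf x k. Proof. by []. Qed.

Lemma rqpoch_neg i : (i < 0)%R -> rqpoch q q i = 0.
Proof.
case: i => // k _.
by rewrite /rqpoch /qpoch big_ord_recl /= expr1 divff // subrr mul0r !invr0.
Qed.

Lemma qpoch_shift x (al : int) (R : nat) : (-1 <= al)%R -> 1 - x * q ^- 1 != 0 ->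
  qpoch x q (R%:Z + al) = qpoch x q al * qf (x * q ^ al) R.
Proof.
case: al => [k|k] H hx; first by rewrite -PoszD !qpoch_nat addnC qfacD.
case: k H => [|k] H; last by exfalso; move: H; rewrite NegzE; lia.
case: R => [|R]; first by rewrite add0r qfac0 mulr1.
rewrite (_ : R.+1%:Z + Negz 0 = R%:Z); last by rewrite NegzE -addn1 PoszD addrK.
rewrite qpoch_nat qfacSl /qpoch big_ord1 /=.
rewrite (_ : x * q ^ Negz 0 * q = x); last by rewrite /exprz expr1 mulfVK.
rewrite (_ : q ^ Negz 0 = q ^- 1) //.
have Eqx : q - x = q * (1 - x / q ^+ 1).
  by rewrite expr1 mulrBr mulr1 mulrCA divff // mulr1.
by field; rewrite q_neq0 Eqx mulf_neq0.
Qed.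

Lemma qfac_exprz_neq0 x : (forall k : int, 1 - x * q ^ k != 0) ->
  forall (c : int) j, qf (x * q ^ c) j != 0.
Proof.
move=> hx c j; apply/prodf_neq0 => i _.
by rewrite -mulrA exprnP -exprzDr ?unitfE //; exact: hx.
Qed.

Lemma qfac_neq0 x : (forall k : int, 1 - x * q ^ k != 0) -> forall j, qf x j != 0.
Proof. by move=> hx j; have := qfac_exprz_neq0 hx 0 j; rewrite expr0z mulr1. Qed.

Lemma qpoch_neq0 x (al : int) : (forall k : int, 1 - x * q ^ k != 0) -> (-1 <= al)%R ->
  qpoch x q al != 0.
Proof.
move=> hx; case: al => [k|k] H; first exact: qfac_neq0.
case: k H => [|k] H; last by exfalso; move: H; rewrite NegzE; lia.
by rewrite /qpoch big_ord1 invr_eq0; have := hx (-1); rewrite exprN1.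
Qed.

Lemma sum_ord_shift p N (G : nat -> F) : (forall r, (r < p)%N -> G r = 0) ->
  \sum_(r < (p + N).+1) G r = \sum_(R < N.+1) G (p + R)%N.
Proof.
move=> H; rewrite -(big_mkord xpredT G) -(big_mkord xpredT (fun R => G (p + R)%N)).
rewrite (@big_cat_nat _ _ _ p) //=; last by lia.
rewrite big1_seq ?add0r; last first.
  by move=> r /andP[_]; rewrite mem_index_iota => /andP[_ h]; apply: H.
rewrite -{1}(add0n p) big_addn (_ : ((p + N).+1 - p = N.+1)%N); last by lia.
by apply: eq_big_nat => R _; rewrite addnC.
Qed.

Section Kernel.
Variables (a b : F) (p t : nat).
(* The six weights sigma - rho of S_3 are exactly the y = (p, t - p, -t)
   with p^2 + t^2 = pt + p + t (see [S3_weight]). *)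
Hypothesis weight_pt : (p * p + t * t = p * t + p + t)%N.
Hypothesis ha : forall k : int, 1 - a * q * q ^ k != 0.
Hypothesis hb : forall k : int, 1 - b * q * q ^ k != 0.
Hypothesis hab : forall k : int, 1 - a * b * q * q ^ k != 0.

Let al : int := 2 * p%:Z - t%:Z.
Let be : int := 2 * t%:Z - p%:Z.
Let A := a * q ^ al.
Let B := b * q ^ be.

(* The shift exponents 2p - t and 2t - p are >= -1, the range in which
   [qpoch_shift] applies. *)
Lemma weight_exponents_ge : (-1 <= al)%R /\ (-1 <= be)%R.
Proof.
(* 4 (p^2 + t^2 - pt - p - t) = (2t - p - 1)^2 + 3p^2 - 6p - 1, and symmetrically. *)
have hp : (p <= 2)%N.
  rewrite leqNgt; apply/negP => hp3.
  by have := sqr_ge0 (2 * t%:Z - p%:Z - 1); rewrite expr2; nia.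
have ht : (t <= 2)%N.
  rewrite leqNgt; apply/negP => ht3.
  by have := sqr_ge0 (2 * p%:Z - t%:Z - 1); rewrite expr2; nia.
by rewrite /al /be; split; nia.
Qed.

Lemma aq_shift : a * q * q ^ al = A * q. Proof. by rewrite /A mulrAC. Qed.
Lemma bq_shift : b * q * q ^ be = B * q. Proof. by rewrite /B mulrAC. Qed.
Lemma abq_shift : a * b * q * q ^+ (p + t) = A * B * q.
Proof.
rewrite /A /B exprnP (_ : (p + t)%N%:Z = al + be); last by rewrite /al /be; lia.
by rewrite exprzDr ?unitfE //; ring.
Qed.

Lemma qfacA_neq0 j : qf (A * q) j != 0.
Proof. by rewrite -aq_shift; exact: qfac_exprz_neq0. Qed.
Lemma qfacB_neq0 j : qf (B * q) j != 0.
Proof. by rewrite -bq_shift; exact: qfac_exprz_neq0. Qed.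
Lemma qfacAB_neq0 j : qf (A * B * q) j != 0.
Proof. by rewrite -abq_shift; exact: (qfac_exprz_neq0 hab (p + t)%N%:Z). Qed.

Let Phiy_const : F :=
  (qpoch (a * q) q al * qpoch (b * q) q be * qf (a * b * q) (p + t))^-1.

Lemma Phiy_shifted R S :
  Phiy (p + R)%N (t + S)%N p%:Z (t%:Z - p%:Z) (- t%:Z) a b q
  = Phiy_const *
    (qf (A * B * q) (R + S) / (qf q R * qf (A * q) R * qf (A * B * q) R *
                              qf q S * qf (B * q) S * qf (A * B * q) S)).
Proof.
have [hal hbe] := weight_exponents_ge.
rewrite /Phiy /rqpoch.
rewrite (_ : (p + R)%N%:Z + (t + S)%N%:Z = (R + S)%N%:Z + (p + t)%N%:Z); last by lia.
rewrite (_ : (p + R)%N%:Z - p%:Z = R%:Z); last by lia.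
rewrite (_ : (p + R)%N%:Z - (t%:Z - p%:Z) = R%:Z + al); last by rewrite /al; lia.
rewrite (_ : (p + R)%N%:Z - - t%:Z = R%:Z + (p + t)%N%:Z); last by lia.
rewrite (_ : (t + S)%N%:Z + - t%:Z = S%:Z); last by lia.
rewrite (_ : (t + S)%N%:Z + (t%:Z - p%:Z) = S%:Z + be); last by rewrite /be; lia.
rewrite (_ : (t + S)%N%:Z + p%:Z = S%:Z + (p + t)%N%:Z); last by lia.
have hm1 x : (forall k : int, 1 - x * q ^ k != 0) -> 1 - x * q ^- 1 != 0.
  by move=> hx; have := hx (-1); rewrite exprN1.
have hpt0 : (-1 <= (p + t)%N%:Z)%R by lia.
rewrite !(qpoch_shift _ hpt0 (hm1 _ hab)).
rewrite (qpoch_shift _ hal (hm1 _ ha)) (qpoch_shift _ hbe (hm1 _ hb)).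
rewrite !qpoch_nat -exprnP aq_shift bq_shift abq_shift /Phiy_const.
have h1 := qpoch_neq0 ha hal; have h2 := qpoch_neq0 hb hbe.
have h3 := qfac_neq0 hab (p + t)%N.
have g1 := qfacq_neq0 R; have g2 := qfacq_neq0 S; have g3 := qfacA_neq0 R.
have g4 := qfacB_neq0 S; have g5 := qfacAB_neq0 R; have g6 := qfacAB_neq0 S.
by field; rewrite ?h1 ?h2 ?h3 ?g1 ?g2 ?g3 ?g4 ?g5 ?g6.
Qed.

Lemma Kcal_shifted N M R S : (R <= N)%N -> (S <= M)%N ->
  Kcal (p + N)%N (t + M)%N (p + R)%N (t + S)%N a b q
  = a ^+ p * b ^+ t * q ^+ (p + t) *
    ((A ^+ R * q ^+ (R * R) / qf q (N - R)) * (B ^+ S * q ^+ (S * S) / qf q (M - S))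
      / q ^+ (R * S)).
Proof.
move=> HR HS; rewrite /Kcal /rqpoch.
rewrite (_ : (p + N)%N%:Z - (p + R)%N%:Z = (N - R)%N%:Z); last by lia.
rewrite (_ : (t + M)%N%:Z - (t + S)%N%:Z = (M - S)%N%:Z); last by lia.
rewrite !qpoch_nat; set E := (_ ^+ 2 - _ + _ ^+ 2).
have hq e : q ^+ e != 0 by rewrite expf_neq0.
have EqE : q ^ E = q ^+ (p + t) * q ^+ (R * R) * q ^+ (S * S) *
                   q ^ (al * R%:Z) * q ^ (be * S%:Z) / q ^+ (R * S).
  apply: (@mulIf _ (q ^+ (R * S))) => //; rewrite divfK //.
  by rewrite !exprnP -!exprzDr ?unitfE //; congr (_ ^ _); rewrite /E /al /be; nia.
rewrite EqE /A /B !exprMn !exprnP !exprz_exp -!exprnP !exprD.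
have g1 := qfacq_neq0 (N - R)%N; have g2 := qfacq_neq0 (M - S)%N.
have g3 := hq (R * S)%N.
by field; rewrite ?g1 ?g2 ?g3.
Qed.

Let kernel_const : F := a ^+ p * b ^+ t * q ^+ (p + t) * Phiy_const.

Lemma kernel_term N M R S : (R <= N)%N -> (S <= M)%N ->
  Kcal (p + N)%N (t + M)%N (p + R)%N (t + S)%N a b q *
    Phiy (p + R)%N (t + S)%N p%:Z (t%:Z - p%:Z) (- t%:Z) a b q
  = kernel_const * dterm q N M A B R S.
Proof.
move=> HR HS; rewrite Kcal_shifted // Phiy_shifted /dterm /kernel_const.
have g1 := qfacq_neq0 (N - R)%N; have g2 := qfacq_neq0 (M - S)%N.
have g3 : q ^+ (R * S) != 0 by rewrite expf_neq0.
have g4 := qfacq_neq0 R; have g5 := qfacq_neq0 S; have g6 := qfacA_neq0 R.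
have g7 := qfacB_neq0 S; have g8 := qfacAB_neq0 R; have g9 := qfacAB_neq0 S.
by field; rewrite ?g1 ?g2 ?g3 ?g4 ?g5 ?g6 ?g7 ?g8 ?g9.
Qed.

(* Phi_(r,s;y) vanishes unless r >= p and s >= t, through 1/(q;q)_(r-p) and
   1/(q;q)_(s-t). *)
Lemma Phiy_vanish r s : (r < p)%N || (s < t)%N ->
  Phiy r s p%:Z (t%:Z - p%:Z) (- t%:Z) a b q = 0.
Proof.
case/orP => h; rewrite /Phiy.
- by rewrite (@rqpoch_neg (r%:Z - p%:Z)) ?(mulr0, mul0r) // subr_lt0 ltz_nat.
- by rewrite (@rqpoch_neg (s%:Z + - t%:Z)) ?(mulr0, mul0r) // subr_lt0 ltz_nat.
Qed.

Lemma kernel_sum_shift N M :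
  \sum_(r < (p + N).+1) \sum_(s < (t + M).+1)
     Kcal (p + N)%N (t + M)%N r s a b q * Phiy r s p%:Z (t%:Z - p%:Z) (- t%:Z) a b q
  = \sum_(0 <= R < N.+1) \sum_(0 <= S < M.+1)
     Kcal (p + N)%N (t + M)%N (p + R)%N (t + S)%N a b q *
     Phiy (p + R)%N (t + S)%N p%:Z (t%:Z - p%:Z) (- t%:Z) a b q.
Proof.
pose y1 := p%:Z; pose y2 := t%:Z - p%:Z; pose y3 := - t%:Z.
rewrite (@sum_ord_shift p N (fun r => \sum_(s < (t + M).+1)
  Kcal (p + N)%N (t + M)%N r s a b q * Phiy r s y1 y2 y3 a b q)); last first.
  by move=> r hr; rewrite big1 // => s _; rewrite Phiy_vanish ?mulr0 ?hr.
rewrite big_mkord; apply: eq_bigr => R _.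
rewrite (@sum_ord_shift t M (fun s =>
  Kcal (p + N)%N (t + M)%N (p + R)%N s a b q * Phiy (p + R)%N s y1 y2 y3 a b q)).
  by rewrite big_mkord.
by move=> s hs; rewrite Phiy_vanish ?mulr0 ?hs ?orbT.
Qed.

Lemma kernel_Phiy n m :
  \sum_(r < n.+1) \sum_(s < m.+1)
     Kcal n m r s a b q * Phiy r s p%:Z (t%:Z - p%:Z) (- t%:Z) a b q
  = (a * q) ^+ p * (b * q) ^+ t * Phiy n m p%:Z (t%:Z - p%:Z) (- t%:Z) a b q.
Proof.
case: (ltnP n p) => Hn.
  rewrite Phiy_vanish ?Hn // mulr0 big1 // => r _; rewrite big1 // => s _.
  by rewrite Phiy_vanish ?mulr0 //; apply/orP; left; have := ltn_ord r; lia.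
case: (ltnP m t) => Hm.
  rewrite Phiy_vanish ?Hm ?orbT // mulr0 big1 // => r _; rewrite big1 // => s _.
  by rewrite Phiy_vanish ?mulr0 //; apply/orP; right; have := ltn_ord s; lia.
have [N ->] : exists N, n = (p + N)%N by exists (n - p)%N; lia.
have [M ->] : exists M, m = (t + M)%N by exists (m - t)%N; lia.
rewrite kernel_sum_shift.
transitivity (\sum_(0 <= R < N.+1) \sum_(0 <= S < M.+1) kernel_const * dterm q N M A B R S).
  by apply: eq_big_nat => R /andP[_ HR]; apply: eq_big_nat => S /andP[_ HS];
    apply: kernel_term.
under eq_big_nat => R _ do rewrite -big_distrr.
rewrite -big_distrr double_sum //; last first.
- exact: qfacAB_neq0.
- exact: qfacB_neq0.
- exact: qfacA_neq0.
by rewrite /= Phiy_shifted /kernel_const !exprMn exprD; ring.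
Qed.

End Kernel.

End Translation.

Definition Phi_coef (F : fieldType) (u v c d z w : F) (s : 'S_3) : F :=
  (-1) ^+ s * (u * z) ^+ (s i0 : nat) * (v / d) ^+ (s i2 == i0)
  * (c / u) ^+ (s i0 == i2) * (d * w) ^+ (2 - s i2)%N.

Lemma S3_weight (s : 'S_3) :
  (s i1 : nat)%:Z - 1 = (2 - s i2)%N%:Z - (s i0 : nat)%:Z /\
  ((s i0 : nat) * s i0 + (2 - s i2) * (2 - s i2)
   = (s i0 : nat) * (2 - s i2) + s i0 + (2 - s i2))%N.
Proof.
have neq i j : i != j -> (s i : nat) != s j.
  by move=> hij; rewrite (inj_eq val_inj) (inj_eq perm_inj).
move: (neq i0 i1 isT) (neq i0 i2 isT) (neq i1 i2 isT).
case: (s i0) (s i1) (s i2) => [[|[|[|?]]] ?] [[|[|[|?]]] ?] [[|[|[|?]]] ?] //= _ _ _;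
  by split; lia.
Qed.

Lemma Phi_expand (F : fieldType) n m (u v c d z w q : F) :
  Phi n m u v c d z w q
  = \sum_(s : 'S_3) Phi_coef u v c d z w s *
      Phiy n m (s i0 : nat)%:Z ((2 - s i2)%N%:Z - (s i0 : nat)%:Z) (- (2 - s i2)%N%:Z)
           (z / q) (w / q) q.
Proof.
apply: eq_bigr => s _; have [E _] := S3_weight s.
rewrite subr0 E (_ : (s i2 : nat)%:Z - 2 = - (2 - s i2)%N%:Z) //.
by have := ltn_ord (s i2); lia.
Qed.

Lemma Phi_coef_scale (F : fieldType) (u v c d z w : F) (s : 'S_3) :
  u != 0 -> d != 0 -> z != 0 -> w != 0 ->
  Phi_coef (u * z) (v * w) (c * z) (d * w) z w s
  = z ^+ (s i0 : nat) * w ^+ (2 - s i2)%N * Phi_coef u v c d z w s.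
Proof.
move=> hu hd hz hw; rewrite /Phi_coef.
rewrite (_ : v * w / (d * w) = v / d); last by field; rewrite hd hw.
rewrite (_ : c * z / (u * z) = c / u); last by field; rewrite hu hz.
move: ((-1) ^+ s) ((v / d) ^+ (s i2 == i0)) ((c / u) ^+ (s i0 == i2)) => e0 e1 e2.
by move: (s i0 : nat) (2 - s i2)%N => p t; rewrite !exprMn; ring.
Qed.

Lemma qfacq_neq0_of_not_root (F : fieldType) (q : F) :
  (forall k : nat, (0 < k)%N -> q ^+ k != 1) -> forall k, qfac q q k != 0.
Proof.
by move=> hq k; apply/prodf_neq0 => i _; rewrite -exprS subr_eq0 eq_sym hq.
Qed.

Unset Implicit Arguments.

Theorem theorem4p9 (F : fieldType) (n m : nat) (u v c d z w q : F) :
  q != 0 -> (forall k : nat, (0 < k)%N -> q ^+ k != 1) ->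
  u != 0 -> d != 0 -> z != 0 -> w != 0 ->
  (forall k : int, 1 - z * q ^ k != 0) ->
  (forall k : int, 1 - w * q ^ k != 0) ->
  (forall k : int, 1 - z * w * q ^ k != 0) ->
  \sum_(r < n.+1) \sum_(s < m.+1)
     Kcal n m r s (z / q) (w / q) q * Phi r s u v c d z w q
  = Phi n m (u * z) (v * w) (c * z) (d * w) z w q.
Proof.
move=> hq hroot hu hd hz hw hz' hw' hzw'.
have hqq := qfacq_neq0_of_not_root hroot.
have ha k : 1 - z / q * q * q ^ k != 0 by rewrite divfK.
have hb k : 1 - w / q * q * q ^ k != 0 by rewrite divfK.
have hab k : 1 - z / q * (w / q) * q * q ^ k != 0.
  rewrite (_ : z / q * (w / q) * q * q ^ k = z * w * q ^ (k - 1)) //.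
  by rewrite exprzDr ?unitfE // exprN1; field.
rewrite Phi_expand.
under eq_bigr => r _ do under eq_bigr => s _ do rewrite Phi_expand big_distrr /=.
under eq_bigr => r _ do rewrite exchange_big /=.
rewrite exchange_big /=; apply: eq_bigr => s _.
under eq_bigr => r _ do under eq_bigr => s' _ do rewrite mulrCA.
rewrite -(eq_bigr _ (fun r _ => big_distrr _ _ _)) /= -big_distrr /=.
have [_ hpt] := S3_weight s.
rewrite kernel_Phiy // !divfK // Phi_coef_scale //.
by move: (Phi_coef _ _ _ _ _ _ s) (Phiy _ _ _ _ _ _ _ _) => C Y; ring.
Qed.
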